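(* Let $S \subseteq \mathbb{R}^n$ be nonempty, closed and convex, and let $F_i = f_i + g_i$, $i=1,\dots,m$, where each $f_i \colon S \to \mathbb{R}$ is continuously differentiable and each $g_i \colon S \to \mathbb{R}$ is convex and continuous. For $\ell>0$ and $x \in S$ define \[ w_\ell(x) := \max_{y \in S} \min_{i = 1,\dots,m} \left\{ \nabla f_i(x)^\top (x - y) + g_i(x) - g_i(y) - \frac{\ell}{2}\|x - y\|^2 \right\}, \] and let $W_\ell(x)$ be the (unique) maximizer $y \in S$ attaining this maximum. Then, for all $\ell > 0$, $w_\ell$ and $W_\ell$ are continuous on $S$. *)

From HB Require Import structures.
From mathcomp Require Import all_boot all_order all_algebra.
From mathcomp Require Import all_classical all_reals all_analysis.
Set Implicit Arguments. Unset Strict Implicit. Unset Printing Implicit Defensive.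
Import Order.TTheory GRing.Theory Num.Theory.
Import numFieldNormedType.Exports.
Local Open Scope classical_set_scope.
Local Open Scope ring_scope.

Definition sqnorm (R : realType) (n : nat) (x : 'rV[R]_n) : R :=
  \sum_(j < n) (x 0 j) ^+ 2.

Definition convex_set_on (R : realType) (n : nat) (S : set 'rV[R]_n) : Prop :=
  forall x y (t : R), S x -> S y -> 0 <= t <= 1 ->
    S (t *: x + (1 - t) *: y).

Definition convex_fun_on (R : realType) (n : nat) (S : set 'rV[R]_n)
  (g : 'rV[R]_n -> R) : Prop :=
  forall x y (t : R), S x -> S y -> 0 <= t <= 1 ->
    g (t *: x + (1 - t) *: y) <= t * g x + (1 - t) * g y.

Definition grad (R : realType) (n : nat) (f : 'rV[R]_n -> R) (x : 'rV[R]_n)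
  : 'rV[R]_n := \row_j ('d f x (delta_mx 0 j)).

Definition C1_on (R : realType) (n : nat) (S : set 'rV[R]_n)
  (f : 'rV[R]_n -> R) : Prop :=
  exists U : set 'rV[R]_n, [/\ open U, S `<=` U,
    (forall x, U x -> differentiable f x) &
    (forall x, U x -> {for x, continuous (grad f)})].

(* the inner objective:  min_i { grad f_i(x)^T (x - y) + g_i(x) - g_i(y)
                                  - l/2 ||x - y||^2 } ,  i ranging over m.+1
   indices; grad f_i(x)^T (x - y) is the differential 'd f_i x (x - y) *)
Definition phi (R : realType) (n m : nat) (f g : 'I_m.+1 -> 'rV[R]_n -> R)
  (l : R) (x y : 'rV[R]_n) : R :=
  let F := fun i : 'I_m.+1 =>
    'd (f i) x (x - y) + g i x - g i y - l / 2 * sqnorm (x - y) in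
  \big[Num.min/F ord0]_(i < m.+1) F i.

Definition w_val (R : realType) (n m : nat) (S : set 'rV[R]_n)
  (f g : 'I_m.+1 -> 'rV[R]_n -> R) (l : R) (x : 'rV[R]_n) : R :=
  sup [set phi f g l x y | y in S].

Definition is_maximizer (R : realType) (n m : nat) (S : set 'rV[R]_n)
  (f g : 'I_m.+1 -> 'rV[R]_n -> R) (l : R) (x y : 'rV[R]_n) : Prop :=
  S y /\ forall z, S z -> phi f g l x z <= phi f g l x y.

From HB Require Import structures.
From mathcomp Require Import all_boot all_order all_algebra.
From mathcomp Require Import all_classical all_reals all_analysis.
From mathcomp Require Import ring lra.
Import Order.TTheory GRing.Theory Num.Theory.
Import numFieldNormedType.Exports.
Local Open Scope classical_set_scope.
Local Open Scope ring_scope.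
Set Implicit Arguments. Unset Strict Implicit. Unset Printing Implicit Defensive.

(* For fixed x, y |-> phi x y is a minimum of functions that are linear in y
   minus a convex function minus (l/2)|x - y|^2, hence strongly concave:
   (phi x y + phi x z)/2 + (l/8)|y - z|^2 <= phi x ((y + z)/2) on S.
   Strong concavity makes maximizing sequences Cauchy (so a maximizer exists,
   S being closed), forces uniqueness, and gives the quadratic growth
   phi x y + (l/4)|y - W x|^2 <= phi x (W x).  When x moves near x0,
   |phi x y - phi x0 y| <= e (1 + |y - x0|^2) with e -> 0, by continuity of
   the gradients and of the g_i.  Adding the growth inequalities at x and at
   x0 then bounds |W x - W x0|^2 and |w x - w x0| by a multiple of e. *)

Section Euclid.
Variables (R : realType) (n : nat).
Implicit Types (u v w x y z : 'rV[R]_n).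

Definition dot u v : R := \sum_(j < n) u 0 j * v 0 j.

Lemma sqnorm_ge0 v : 0 <= sqnorm v.
Proof. by apply: sumr_ge0 => j _; rewrite sqr_ge0. Qed.

Lemma sqnorm_eq0 v : sqnorm v = 0 -> v = 0.
Proof.
move=> /eqP; rewrite psumr_eq0 => [/allP v0|j _]; last exact: sqr_ge0.
apply/rowP => j; have /= := v0 j (mem_index_enum j).
by rewrite mxE sqrf_eq0 => /eqP.
Qed.

Lemma sqnormN v : sqnorm (- v) = sqnorm v.
Proof. by apply: eq_bigr => j _; rewrite mxE sqrrN. Qed.

Lemma sqnormB u v : sqnorm (u - v) = sqnorm u - 2 * dot u v + sqnorm v.
Proof.
rewrite /sqnorm /dot mulr_sumr -sumrB -big_split /=.
by apply: eq_bigr => j _; rewrite !mxE; ring.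
Qed.

Lemma dotBl u v w : dot (u - v) w = dot u w - dot v w.
Proof. by rewrite /dot -sumrB; apply: eq_bigr => j _; rewrite !mxE mulrBl. Qed.

Lemma dotBr u v w : dot u (v - w) = dot u v - dot u w.
Proof. by rewrite /dot -sumrB; apply: eq_bigr => j _; rewrite !mxE mulrBr. Qed.

Lemma dotNr u v : dot u (- v) = - dot u v.
Proof. by rewrite /dot -sumrN; apply: eq_bigr => j _; rewrite !mxE mulrN. Qed.

Lemma sqnormD_le u v : sqnorm (u + v) <= 2 * sqnorm u + 2 * sqnorm v.
Proof.
rewrite /sqnorm !mulr_sumr -big_split /=; apply: ler_sum => j _.
by rewrite mxE; have := sqr_ge0 (u 0 j - v 0 j); rewrite !expr2; lra.
Qed.

Lemma sqr_normr_le_sqnorm v : `|v| ^+ 2 <= sqnorm v.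
Proof.
have [->|v0] := eqVneq `|v| 0; first by rewrite expr0n sqnorm_ge0.
have [[i j] /= vij] := mx_norm_neq0 v0.
rewrite [X in X ^+ 2]/Num.Def.normr /= vij (ord1 i) real_normK ?num_real //.
by rewrite /sqnorm (bigD1 j) //= lerDl; apply: sumr_ge0 => k _; exact: sqr_ge0.
Qed.

Lemma normr_lt_sqnorm v e : 0 < e -> sqnorm v < e ^+ 2 -> `|v| < e.
Proof.
move=> e0 /(le_lt_trans (sqr_normr_le_sqnorm v)).
by rewrite ltr_sqr ?nnegrE ?normr_ge0 ?ltW.
Qed.

Lemma normr_le_sqnorm1 v : `|v| <= 1 + sqnorm v.
Proof.
have := sqr_normr_le_sqnorm v; have := sqr_ge0 (`|v| - 1); rewrite !expr2.
have := normr_ge0 v; nra.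
Qed.

Lemma normr_dot_le u v : `|dot u v| <= n%:R * (`|u| * `|v|).
Proof.
have entry_le (w : 'rV[R]_n) j : `|w 0 j| <= `|w|.
  rewrite [leRHS]/Num.Def.normr /= mx_normrE.
  by apply/bigmax_geP; right; exists (0, j).
rewrite /dot -[n in n%:R]card_ord -sumr_const mulr_suml mul1r.
apply: le_trans (ler_norm_sum _ _ _) _.
by apply: ler_sum => j _; rewrite normrM ler_pM.
Qed.

Lemma sqnorm_le v : sqnorm v <= n%:R * `|v| ^+ 2.
Proof.
have -> : sqnorm v = dot v v by apply: eq_bigr => j _; rewrite expr2.
by rewrite expr2; apply: le_trans (ler_norm _) (normr_dot_le v v).
Qed.

Lemma diff_dotE (f : 'rV[R]_n -> R) x v : 'd f x v = dot (grad f x) v.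
Proof.
rewrite {1}(row_sum_delta v) linear_sum /dot; apply: eq_bigr => j _.
by rewrite linearZ /= /grad mxE mulrC.
Qed.

Lemma sqnorm_continuous : continuous (@sqnorm R n).
Proof.
apply: continuous_big => [|j _]; first exact: add_continuous.
move=> v.
by have := cvg_comp _ _ (@coord_continuous R 1 n 0 j v) (@exprn_continuous R 2 _).
Qed.

(* The midpoint, written as the convex combination of [convex_set_on]. *)
Definition mid y z : 'rV[R]_n := 2^-1 *: y + (1 - 2^-1) *: z.

Lemma convex_mid S y z : convex_set_on S -> S y -> S z -> S (mid y z).
Proof.
by move=> Sconv Sy Sz; apply: Sconv; rewrite // invr_ge0 ler0n invf_le1 ?ler1n.
Qed.

Lemma subr_mid x y z : x - mid y z = 2^-1 *: (x - y) + (1 - 2^-1) *: (x - z).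
Proof. by apply/rowP => j; rewrite !mxE; ring. Qed.

Lemma sqnorm_subr_mid x y z : sqnorm (x - mid y z) =
  (sqnorm (x - y) + sqnorm (x - z)) / 2 - sqnorm (y - z) / 4.
Proof.
rewrite /sqnorm -big_split /= !mulr_suml -sumrB.
by apply: eq_bigr => j _; rewrite !mxE; field.
Qed.

End Euclid.

Section StrongMidconcavity.
Variables (R : realType) (n : nat) (S : set 'rV[R]_n).
Implicit Types (h : 'rV[R]_n -> R) (a y z : 'rV[R]_n).

Definition maximizes h y := S y /\ forall z, S z -> h z <= h y.

Definition strongly_midconcave (k : R) h := forall y z, S y -> S z ->
  (h y + h z) / 2 + k * sqnorm (y - z) <= h (mid y z).

Lemma sup_maximizes h y : maximizes h y -> sup [set h z | z in S] = h y.
Proof.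
move=> [Sy ymax]; apply/le_anti/andP; split.
  by apply: ge_sup; [exists (h y), y | move=> _ [z Sz <-]; exact: ymax].
apply: sup_upper_bound; last by exists y.
by split; [exists (h y), y | exists (h y) => _ [z Sz <-]; exact: ymax].
Qed.

Variable k : R.
Hypotheses (k_gt0 : 0 < k) (Sconv : convex_set_on S).

Lemma maximizes_growth h y ys : strongly_midconcave k h -> maximizes h ys ->
  S y -> h y + 2 * k * sqnorm (y - ys) <= h ys.
Proof.
move=> hconc [Sys ysmax] Sy.
have := hconc _ _ Sy Sys; have := ysmax _ (convex_mid Sconv Sy Sys); lra.
Qed.

Lemma maximizes_unique h y1 y2 : strongly_midconcave k h ->
  maximizes h y1 -> maximizes h y2 -> y1 = y2.
Proof.
move=> hconc y1max y2max.
have := maximizes_growth hconc y2max y1max.1.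
have := maximizes_growth hconc y1max y2max.1.
rewrite -opprB sqnormN => le12 le21.
have : k * sqnorm (y1 - y2) <= 0 by lra.
rewrite pmulr_rle0 // => d_le0.
apply/eqP; rewrite -subr_eq0; apply/eqP/sqnorm_eq0.
by apply/eqP; rewrite eq_le d_le0 sqnorm_ge0.
Qed.

Lemma maximizing_seq_cvg h s (u : nat -> 'rV[R]_n) : strongly_midconcave k h ->
  (forall y, S y -> h y <= s) ->
  (forall N, S (u N) /\ s - N.+1%:R^-1 < h (u N)) -> cvg (u @ \oo).
Proof.
move=> hconc le_s hu; apply/cauchy_cvgP; apply: cauchy_exP => eps eps_gt0.
have keps : 0 < k * eps ^+ 2 by rewrite mulr_gt0 ?exprn_gt0.
have [N /= ltN] := filter_ex (near_infty_natSinv_lt (PosNum keps)).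
exists (u N), N => // j /= leNj.
rewrite -ball_normE /ball_ /=; apply: normr_lt_sqnorm => //.
rewrite -(ltr_pM2l k_gt0).
have := hconc _ _ (hu N).1 (hu j).1.
have := le_s _ (convex_mid Sconv (hu N).1 (hu j).1).
have : j.+1%:R^-1 <= N.+1%:R^-1 :> R by rewrite lef_pV2 ?posrE ?ler_nat.
move: ltN (hu N).2 (hu j).2; set aN := N.+1%:R^-1; set aj := j.+1%:R^-1; lra.
Qed.

Lemma maximizes_exists h : strongly_midconcave k h -> closed S -> S !=set0 ->
  (exists M, forall y, S y -> h y <= M) -> {within S, continuous h} ->
  exists y, maximizes h y.
Proof.
move=> hconc Sclosed [y0 Sy0] [M hM] hcont.
have hS : has_sup [set h y | y in S].
  by split; [exists (h y0), y0 | exists M => _ [y Sy <-]; exact: hM].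
set s := sup [set h y | y in S].
have le_s y : S y -> h y <= s by move=> Sy; apply: sup_upper_bound => //; exists y.
have /choice[u hu] : forall N, exists y, S y /\ s - N.+1%:R^-1 < h y.
  move=> N; have N_gt0 : 0 < N.+1%:R^-1 :> R by rewrite invr_gt0.
  by have [_ [y Sy <-] lt_hy] := sup_adherent N_gt0 hS; exists y.
have u_cvg := maximizing_seq_cvg hconc le_s hu; set y := lim (u @ \oo).
have Sy : S y by apply: closed_cvg u_cvg => //; apply: nearW => N; case: (hu N).
exists y; split => // z Sz; apply: le_trans (le_s z Sz) _.
apply/ler_addgt0Pr => e e_gt0; have e2 : 0 < e / 2 by rewrite divr_gt0.
have /cvgrPdist_lt /(_ _ e2) /u_cvg near_y := (subspace_continuousP S h).1 hcont _ Sy.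
have {}near_y : \forall N \near \oo, S (u N) -> `|h y - h (u N)| < e / 2 by [].
have [j [/(_ (hu j).1)]] :=
  filter_ex (filterI near_y (near_infty_natSinv_lt (PosNum e2))).
rewrite ltr_norml /= => /andP[hj _]; have := (hu j).2; set aj := j.+1%:R^-1; lra.
Qed.

Section Perturbation.
Variables (h0 h1 : 'rV[R]_n -> R) (y0 y1 a : 'rV[R]_n) (e : R).
Hypotheses (h0_conc : strongly_midconcave k h0) (h1_conc : strongly_midconcave k h1).
Hypotheses (y0max : maximizes h0 y0) (y1max : maximizes h1 y1).
Hypotheses (e_ge0 : 0 <= e) (e_le_k : e <= k).
Hypothesis h10 : forall y, S y -> `|h1 y - h0 y| <= e * (1 + sqnorm (y - a)).

Let d := sqnorm (y1 - y0).
Let c := sqnorm (y0 - a).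

Let growth0 : h0 y1 + 2 * k * d <= h0 y0.
Proof. exact: maximizes_growth h0_conc y0max y1max.1. Qed.

Let growth1 : h1 y0 + 2 * k * d <= h1 y1.
Proof. by have := maximizes_growth h1_conc y1max y0max.1; rewrite -opprB sqnormN. Qed.

Let close0 : - (e * (1 + c)) <= h1 y0 - h0 y0 <= e * (1 + c).
Proof. by rewrite -ler_norml; exact: h10 y0max.1. Qed.

Let close1 : - (e * (1 + 2 * d + 2 * c)) <= h1 y1 - h0 y1 <= e * (1 + 2 * d + 2 * c).
Proof.
rewrite -ler_norml; apply: le_trans (h10 y1max.1) _.
have : sqnorm (y1 - a) <= 2 * d + 2 * c by rewrite -(subrKA y0) sqnormD_le.
rewrite -(lerD2l 1) => /(ler_wpM2l e_ge0).
have := mulr_ge0 e_ge0 (sqnorm_ge0 (y0 - a)); rewrite -/c; lra.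
Qed.

Let ed_le_kd : e * d <= k * d.
Proof. by rewrite ler_wpM2r ?sqnorm_ge0. Qed.

Lemma maximizer_shift_le : 2 * k * sqnorm (y1 - y0) <= e * (2 + 3 * sqnorm (y0 - a)).
Proof.
rewrite -/d -/c; move: close0 close1 growth0 growth1 ed_le_kd.
by move=> /andP[? ?] /andP[? ?] ? ? ?; lra.
Qed.

Lemma max_value_shift_le : `|h1 y1 - h0 y0| <= e * (1 + 2 * sqnorm (y0 - a)).
Proof.
have : 0 <= e * c by rewrite mulr_ge0 ?sqnorm_ge0.
have : 0 <= k * d by rewrite mulr_ge0 ?sqnorm_ge0 ?(le_trans e_ge0 e_le_k).
rewrite -/c ler_norml; move: close0 close1 growth0 growth1 ed_le_kd.
by move=> /andP[? ?] /andP[? ?] ? ? ? ? ?; apply/andP; split; lra.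
Qed.

End Perturbation.
End StrongMidconcavity.

Section ParametricMaximizer.
Variables (R : realType) (n : nat) (S : set 'rV[R]_n).
Variables (P : topologicalType) (A : set P) (h : P -> 'rV[R]_n -> R).
Variables (W : P -> 'rV[R]_n) (k : R).
Hypotheses (k_gt0 : 0 < k) (Sconv : convex_set_on S).
Hypothesis h_conc : forall x, A x -> strongly_midconcave S k (h x).
Hypothesis W_max : forall x, A x -> maximizes S (h x) (W x).
Hypothesis h_close : forall x0, A x0 -> exists a, forall e, 0 < e ->
  \forall x \near x0, A x -> forall y, S y ->
    `|h x y - h x0 y| <= e * (1 + sqnorm (y - a)).

Lemma maximizer_continuous : {within A, continuous W}.
Proof.
apply/subspace_continuousP => x0 Ax0; apply/cvgrPdist_lt => eps eps_gt0.
have [a close] := h_close Ax0; set c := sqnorm (W x0 - a).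
have c_gt0 : 0 < 2 + 3 * c by rewrite ltr_wpDr ?mulr_ge0 ?sqnorm_ge0.
set e := Num.min k (k * eps ^+ 2 / (2 + 3 * c)).
have e_gt0 : 0 < e by rewrite lt_min k_gt0 !(divr_gt0, mulr_gt0, exprn_gt0).
have e_le_k : e <= k by rewrite ge_min lexx.
apply: filterS (close e e_gt0) => x close_x Ax.
have := maximizer_shift_le Sconv (h_conc Ax0) (h_conc Ax) (W_max Ax0)
  (W_max Ax) (ltW e_gt0) e_le_k (close_x Ax).
have : e * (2 + 3 * c) <= k * eps ^+ 2 by rewrite -ler_pdivlMr // ge_min lexx orbT.
rewrite -/c distrC => le_e le_d; apply: normr_lt_sqnorm => //.
rewrite -(ltr_pM2l k_gt0); have := mulr_gt0 k_gt0 (exprn_gt0 2 eps_gt0); lra.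
Qed.

Lemma max_value_continuous : {within A, continuous (fun x => h x (W x))}.
Proof.
apply/subspace_continuousP => x0 Ax0; apply/cvgrPdist_lt => eps eps_gt0.
have [a close] := h_close Ax0; set c := sqnorm (W x0 - a).
have c_gt0 : 0 < 1 + 2 * c by rewrite ltr_wpDr ?mulr_ge0 ?sqnorm_ge0.
set e := Num.min k (eps / 2 / (1 + 2 * c)).
have e_gt0 : 0 < e by rewrite lt_min k_gt0 !divr_gt0.
have e_le_k : e <= k by rewrite ge_min lexx.
apply: filterS (close e e_gt0) => x close_x Ax.
have := max_value_shift_le Sconv (h_conc Ax0) (h_conc Ax) (W_max Ax0)
  (W_max Ax) (ltW e_gt0) e_le_k (close_x Ax).
have : e * (1 + 2 * c) <= eps / 2 by rewrite -ler_pdivlMr // ge_min lexx orbT.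
rewrite -/c distrC; lra.
Qed.

End ParametricMaximizer.

Section FiniteMinimum.
Variables (R : realType) (m : nat).

Lemma normr_bigmin_sub_le (F G : 'I_m.+1 -> R) c : (forall i, `|F i - G i| <= c) ->
  `|\big[Num.min/F ord0]_(i < m.+1) F i - \big[Num.min/G ord0]_(i < m.+1) G i| <= c.
Proof.
suff min_le (F' G' : 'I_m.+1 -> R) : (forall i, `|F' i - G' i| <= c) ->
    \big[Num.min/G' ord0]_(i < m.+1) G' i - c <= \big[Num.min/F' ord0]_(i < m.+1) F' i.
  move=> FG; have GF i : `|G i - F i| <= c by rewrite distrC.
  by have := min_le _ _ FG; have := min_le _ _ GF; rewrite ler_norml; lra.
move=> FG; suff le_F i : \big[Num.min/G' ord0]_(i < m.+1) G' i - c <= F' i.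
  by apply: le_bigmin => [|i _]; exact: le_F.
have := FG i; rewrite ler_norml => /andP[+ _].
have := bigmin_le (G' ord0) i G'; lra.
Qed.

Lemma bigmin_continuous (T : topologicalType) (F : 'I_m.+1 -> T -> R) t :
  (forall i, {for t, continuous (F i)}) ->
  {for t, continuous (fun s => \big[Num.min/F ord0 s]_(i < m.+1) F i s)}.
Proof.
move=> Fc; rewrite /prop_for /continuous_at.
elim: (index_enum _) => [|i r IHr].
  by under eq_fun do rewrite big_nil; rewrite big_nil; exact: Fc.
under eq_fun do rewrite big_cons; rewrite big_cons.
exact: continuous_min (Fc i) IHr.
Qed.

Lemma bigmin_midconcave n (S : set 'rV[R]_n) k (F : 'I_m.+1 -> 'rV[R]_n -> R) :
  (forall i, strongly_midconcave S k (F i)) ->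
  strongly_midconcave S k (fun y => \big[Num.min/F ord0 y]_(i < m.+1) F i y).
Proof.
move=> Fconc y z Sy Sz.
suff le_F i : (\big[Num.min/F ord0 y]_(i < m.+1) F i y
    + \big[Num.min/F ord0 z]_(i < m.+1) F i z) / 2 + k * sqnorm (y - z)
    <= F i (mid y z).
  by apply: le_bigmin => [|i _]; exact: le_F.
apply: le_trans (Fconc i y z Sy Sz); rewrite lerD2r ler_pM2r ?invr_gt0 //.
by apply: lerD; exact: bigmin_le.
Qed.

End FiniteMinimum.

Lemma convex_fun_lower_bound (R : realType) n (S : set 'rV[R]_n) g x :
  convex_set_on S -> convex_fun_on S g -> S x -> g @ within S (nbhs x) --> g x ->
  exists b, forall y, S y -> g x - 1 - b * `|x - y| <= g y.
Proof.
move=> Sconv gconv Sx /cvgrPdist_lt /(_ _ ltr01) /nbhs_ballP[d /= d_gt0 gd].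
have near_x z : S z -> `|x - z| < d -> g x - 1 < g z.
  move=> Sz xz; have := gd z; rewrite -ball_normE /= => /(_ xz Sz).
  by rewrite ltr_norml => /andP[_]; lra.
exists (2 / d) => y Sy; set r := `|x - y|.
have r_ge0 : 0 <= r := normr_ge0 _.
have [r_lt|r_ge] := ltP r d.
  have := near_x y Sy r_lt; have : 0 <= 2 / d * r by rewrite mulr_ge0 ?divr_ge0 // ltW.
  lra.
have r_gt0 : 0 < r := lt_le_trans d_gt0 r_ge.
set t := d / (2 * r).
have t_gt0 : 0 < t by rewrite divr_gt0 ?mulr_gt0.
have t_le1 : t <= 1 by rewrite ler_pdivrMr ?mulr_gt0 // mul1r; lra.
have Sz : S (t *: y + (1 - t) *: x) by apply: Sconv; rewrite // (ltW t_gt0) t_le1.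
have : `|x - (t *: y + (1 - t) *: x)| < d.
  have -> : x - (t *: y + (1 - t) *: x) = t *: (x - y).
    by apply/rowP => j; rewrite !mxE; ring.
  rewrite mx_normZ gtr0_norm // -/r (_ : t * r = d / 2); first lra.
  by rewrite /t; field; rewrite gt_eqF.
move=> /(near_x _ Sz); have := gconv y x t Sy Sx; rewrite ltW ?t_le1 // => /(_ isT).
move=> conv lt_gz; have : t * (g x - g y) < 1 by lra.
rewrite -ltr_pdivlMl // (_ : t^-1 = 2 / d * r); first lra.
by rewrite /t invf_div; field; rewrite gt_eqF.
Qed.

Section Phi.
Variables (R : realType) (n m : nat) (S : set 'rV[R]_n).
Variables (f g : 'I_m.+1 -> 'rV[R]_n -> R) (l : R).
Hypotheses (l_gt0 : 0 < l) (Sconv : convex_set_on S).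
Hypotheses (g_conv : forall i, convex_fun_on S (g i))
  (g_cont : forall i, {within S, continuous (g i)}).
Implicit Types (x y z : 'rV[R]_n).

Let l2_gt0 : 0 < l / 2. Proof. by rewrite divr_gt0. Qed.

Definition phi_term i x y :=
  'd (f i) x (x - y) + g i x - g i y - l / 2 * sqnorm (x - y).

Lemma phiE x y :
  phi f g l x y = \big[Num.min/phi_term ord0 x y]_(i < m.+1) phi_term i x y.
Proof. by []. Qed.

Lemma phi_term_midconcave i x : strongly_midconcave S (l / 8) (phi_term i x).
Proof.
move=> y z Sy Sz; have half : 1 - 2^-1 = 2^-1 :> R by field.
have := @g_conv i y z 2^-1 Sy Sz; rewrite invr_ge0 ler0n invf_le1 ?ler1n //.
move=> /(_ isT); rewrite -/(mid y z) half /phi_term sqnorm_subr_mid.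
have -> : 'd (f i) x (x - mid y z) =
    2^-1 * 'd (f i) x (x - y) + 2^-1 * 'd (f i) x (x - z).
  by rewrite subr_mid half linearD !linearZ.
lra.
Qed.

Lemma phi_midconcave x : strongly_midconcave S (l / 8) (phi f g l x).
Proof. exact: bigmin_midconcave (phi_term_midconcave ^~ x). Qed.

Lemma phi_bounded_above x : S x -> exists M, forall y, S y -> phi f g l x y <= M.
Proof.
move=> Sx; have [b gb] := convex_fun_lower_bound Sconv (@g_conv ord0) Sx
  ((subspace_continuousP _ _).1 (@g_cont ord0) x Sx).
set D := grad (f ord0) x; set K := n%:R * `|D| + b.
exists (1 + K ^+ 2 / (2 * l)) => y Sy; apply: le_trans (bigmin_le _ ord0 _) _.
rewrite /phi_term diff_dotE -/D; set r := `|x - y|.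
have quad : K * r - l / 2 * r ^+ 2 <= K ^+ 2 / (2 * l).
  rewrite ler_pdivlMr ?mulr_gt0 //; have := sqr_ge0 (K - l * r).
  by rewrite sqrrB; lra.
have := ler_wpM2l (ltW l2_gt0) (sqr_normr_le_sqnorm (x - y)).
have := le_trans (ler_norm _) (normr_dot_le D (x - y)); have := gb y Sy.
have -> : n%:R * (`|D| * r) = K * r - b * r by rewrite /K; ring.
move: quad; rewrite -/r; move: (K ^+ 2 / (2 * l)) (K * r) => Q Kr; lra.
Qed.

Lemma phi_term_continuous i x : differentiable (f i) x ->
  {within S, continuous (phi_term i x)}.
Proof.
move=> dfx; have xB (y : 'rV[R]_n) : (fun z => x - z) @ nbhs y --> x - y.
  by apply: (@cvgB _ _ _ (nbhs y)); [exact: cvg_cst | exact: cvg_id].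
apply: within_continuousB; last first.
  apply: continuous_subspaceT => y; apply: (@cvgMl_tmp _ _ (nbhs y)).
  by have := cvg_comp _ _ (xB y) (@sqnorm_continuous R n (x - y)).
apply: within_continuousB => //; apply: continuous_subspaceT => y.
apply: (@cvgD _ _ _ (nbhs y)); last exact: cvg_cst.
have dfc := diff_continuous dfx; by have := cvg_comp _ _ (xB y) (dfc (x - y)).
Qed.

Lemma phi_continuous x : (forall i, differentiable (f i) x) ->
  {within S, continuous (phi f g l x)}.
Proof.
by move=> df y; apply: bigmin_continuous => i; exact: phi_term_continuous.
Qed.

Lemma phi_term_sub i x x0 y : phi_term i x y - phi_term i x0 y =
  dot (grad (f i) x) (x - x0) - dot (grad (f i) x - grad (f i) x0) (y - x0)
  + (g i x - g i x0) - l / 2 * sqnorm (x - x0) + l * dot (x - x0) (y - x0).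
Proof.
(* Generalizing the differentials and gradients first keeps rewriting from
   unfolding the neighbourhood filters at x and x0 to compare them. *)
rewrite /phi_term; move: (diff_dotE (f i) x (x - y)) (diff_dotE (f i) x0 (x0 - y)).
generalize ('d (f i) x (x - y)) ('d (f i) x0 (x0 - y)) (grad (f i) x) (grad (f i) x0).
move=> a b D D0 -> ->; rewrite -[x - y](subrKA x0) -[x0 - y]opprB.
set u := x - x0; set v := y - x0.
by rewrite dotBr dotNr dotBl sqnormB sqnormN; lra.
Qed.

Definition phi_term_gap i x0 x :=
  n%:R * (`|grad (f i) x| * `|x - x0|) + n%:R * `|grad (f i) x - grad (f i) x0|
  + `|g i x - g i x0| + l / 2 * (n%:R * `|x - x0| ^+ 2) + l * (n%:R * `|x - x0|).

Lemma phi_term_sub_le i x x0 y :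
  `|phi_term i x y - phi_term i x0 y| <= phi_term_gap i x0 x * (1 + sqnorm (y - x0)).
Proof.
rewrite phi_term_sub /phi_term_gap; generalize (grad (f i) x) (grad (f i) x0).
move=> Dx D0; set u := x - x0; set v := y - x0; set w := 1 + sqnorm v.
have w_ge1 : 1 <= w by rewrite lerDl sqnorm_ge0.
have le_w a : 0 <= a -> a <= a * w by move=> a_ge0; rewrite ler_peMr.
have n_ge0 : 0 <= n%:R :> R := ler0n _ _.
have dot_le a : `|dot a v| <= n%:R * `|a| * w.
  rewrite -mulrA; apply: le_trans (normr_dot_le _ _) _.
  by rewrite ler_wpM2l ?ler_wpM2l ?normr_le_sqnorm1.
have s1 : 0 <= l / 2 * sqnorm u by rewrite mulr_ge0 ?sqnorm_ge0 ?ltW.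
have s2 : l / 2 * sqnorm u <= l / 2 * (n%:R * `|u| ^+ 2 * w).
  apply: ler_wpM2l; first exact: ltW.
  apply: le_trans (sqnorm_le u) (le_w _ _).
  by rewrite mulr_ge0 ?sqr_ge0.
have t1 := le_w _ (mulr_ge0 n_ge0 (mulr_ge0 (normr_ge0 Dx) (normr_ge0 u))).
have t3 := le_w _ (normr_ge0 (g i x - g i x0)).
have lb3 : `|l * dot u v| <= l * (n%:R * `|u| * w).
  by rewrite normrM gtr0_norm ?ler_pM2l ?dot_le.
have := ler_norml (g i x - g i x0) `|g i x - g i x0|.
rewrite lexx => /esym/andP[? ?].
move: (normr_dot_le Dx u) (dot_le (Dx - D0)) lb3; rewrite !ler_norml.
by move=> /andP[? ?] /andP[? ?] /andP[? ?]; apply/andP; split; lra.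
Qed.

Lemma phi_term_gap_le i x0 x eta : 0 <= eta <= 1 -> `|x - x0| <= eta ->
  `|grad (f i) x - grad (f i) x0| <= eta -> `|g i x - g i x0| <= eta ->
  phi_term_gap i x0 x <= eta * (n%:R * (`|grad (f i) x0| + 2) + 1 + 2 * l * n%:R).
Proof.
move=> /andP[eta_ge0 eta_le1] le_u + le_g; rewrite /phi_term_gap.
generalize (grad (f i) x) (grad (f i) x0) => Dx D0 le_dD; set u := x - x0.
have n_ge0 : 0 <= n%:R :> R := ler0n _ _.
have le_Dx : `|Dx| <= `|D0| + 1.
  rewrite -(subrK D0 Dx); apply: le_trans (ler_normD _ _) _; lra.
have p1 : n%:R * (`|Dx| * `|u|) <= n%:R * ((`|D0| + 1) * eta).
  by rewrite ler_wpM2l // ler_pM.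
have p2 : `|u| ^+ 2 <= eta.
  by rewrite expr2; apply: le_trans (ler_pM _ _ le_u le_u) _; rewrite ?ler_piMr.
have := ler_wpM2l n_ge0 le_dD.
have := ler_wpM2l (ltW l2_gt0) (ler_wpM2l n_ge0 p2).
have := ler_wpM2l (ltW l_gt0) (ler_wpM2l n_ge0 le_u).
have := mulr_ge0 (ltW l_gt0) (mulr_ge0 n_ge0 eta_ge0).
move: p1; lra.
Qed.

Lemma phi_term_gap_near0 i x0 : S x0 -> {for x0, continuous (grad (f i))} ->
  forall e, 0 < e -> \forall x \near x0, S x -> phi_term_gap i x0 x <= e.
Proof.
move=> Sx0 Dc e e_gt0.
set K := n%:R * (`|grad (f i) x0| + 2) + 1 + 2 * l * n%:R.
have K_gt0 : 0 < K.
  have := mulr_ge0 (ler0n R n) (addr_ge0 (normr_ge0 (grad (f i) x0)) (ler0n R 2)).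
  have := mulr_ge0 (mulr_ge0 (ler0n R 2) (ltW l_gt0)) (ler0n R n); rewrite /K; lra.
set eta := Num.min 1 (e / K).
have eta_gt0 : 0 < eta by rewrite lt_min ltr01 divr_gt0.
have eta_le1 : eta <= 1 by rewrite ge_min lexx.
have etaK : eta * K <= e by rewrite -ler_pdivlMr // ge_min lexx orbT.
have /cvgrPdist_lt /(_ _ eta_gt0) near_D := Dc.
have /cvgrPdist_lt /(_ _ eta_gt0) near_g :=
  (subspace_continuousP _ _).1 (@g_cont i) x0 Sx0.
have near_x : \forall x \near x0, `|x0 - x| < eta.
  by apply/nbhs_ballP; exists eta => // z; rewrite -ball_normE.
near=> x => Sx; apply: le_trans etaK.
apply: phi_term_gap_le; rewrite ?(ltW eta_gt0) ?eta_le1 // distrC; apply: ltW.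
- by near: x.
- by move: Sx; near: x.
Unshelve. all: by end_near.
Qed.

Hypothesis f_C1 : forall i, C1_on S (f i).

Lemma phi_locally_close x0 : S x0 -> forall e, 0 < e ->
  \forall x \near x0, S x -> forall y,
    `|phi f g l x y - phi f g l x0 y| <= e * (1 + sqnorm (y - x0)).
Proof.
move=> Sx0 e e_gt0.
near=> x => Sx y; rewrite !phiE; apply: normr_bigmin_sub_le => i.
have gap_le : phi_term_gap i x0 x <= e.
  move: i Sx; near: x; apply: filter_forall => i; have [U [_ SU _ Dc]] := f_C1 i.
  exact: (phi_term_gap_near0 Sx0 (Dc _ (SU _ Sx0))).
apply: le_trans (phi_term_sub_le i x x0 y) _.
by rewrite ler_wpM2r // addr_ge0 ?sqnorm_ge0.
Unshelve. all: by end_near.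
Qed.

End Phi.

Unset Implicit Arguments.

Theorem theorem3p12 (R : realType) (n m : nat) (S : set 'rV[R]_n)
  (f g : 'I_m.+1 -> 'rV[R]_n -> R) :
  S !=set0 -> closed S -> convex_set_on S ->
  (forall i, C1_on S (f i)) ->
  (forall i, convex_fun_on S (g i)) ->
  (forall i, {within S, continuous (g i)}) ->
  forall l : R, 0 < l ->
    (* W_l is well defined: unique maximizer *)
    (forall x, S x -> exists! y, is_maximizer S f g l x y) /\
    (* w_l is continuous on S *)
    {within S, continuous (w_val S f g l)} /\
    (* W_l is continuous on S *)
    (forall W : 'rV[R]_n -> 'rV[R]_n,
       (forall x, S x -> is_maximizer S f g l x (W x)) ->
       {within S, continuous W}).
Proof.
move=> S0 Sclosed Sconv f_C1 g_conv g_cont l l_gt0.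
have l8_gt0 : 0 < l / 8 by rewrite divr_gt0.
have conc x := phi_midconcave f l g_conv x.
have close x0 : S x0 -> exists a, forall e, 0 < e -> \forall x \near x0, S x ->
    forall y, S y -> `|phi f g l x y - phi f g l x0 y| <= e * (1 + sqnorm (y - a)).
  move=> Sx0; exists x0 => e e_gt0.
  apply: filterS (phi_locally_close l_gt0 g_cont f_C1 Sx0 e_gt0).
  by move=> x + Sx y _ => /(_ Sx).
have max_ex x : S x -> exists y, is_maximizer S f g l x y.
  move=> Sx; have df i : differentiable (f i) x.
    by have [U [_ SU df _]] := f_C1 i; exact: df _ (SU _ Sx).
  have [y ymax] := maximizes_exists l8_gt0 Sconv (conc x) Sclosed S0
    (phi_bounded_above f l_gt0 Sconv g_conv g_cont Sx) (phi_continuous g_cont df).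
  by exists y.
have /choice[W0 W0_max] : forall x, exists y, S x -> is_maximizer S f g l x y.
  by move=> x; have [/max_ex[y]|] := pselect (S x); [exists y | exists x].
split; [|split].
- move=> x Sx; have [y ymax] := max_ex x Sx.
  by exists y; split=> // z; exact: (maximizes_unique l8_gt0 Sconv (conc x) ymax).
- apply: subspace_eq_continuous (max_value_continuous l8_gt0 Sconv _ W0_max close).
    by move=> x /[!inE] Sx; apply/esym/(sup_maximizes (W0_max x Sx)).
  by move=> x _; exact: conc.
- move=> W W_max; exact: maximizer_continuous l8_gt0 Sconv _ W_max close.
Qed.
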